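(* Let $M,N$ be weight sequences with $m_k^{1/k}\to\infty$, $n_k^{1/k}\to\infty$ and $C:=\mathrm{mg}(M,N)<\infty$. Then $h_m(t)\le C^jn_jt^jh_n(Ct)$ for all $t>0$ and $j\in\mathbb{N}$, and $h_m(t)\le h_n\big(\tfrac{eC}{2}t\big)^2$ for all $t>0$.
   Context: A weight sequence is a sequence $M=(M_k)_{k\ge0}$ of positive reals with $M_k=\mu_1\cdots\mu_k$, $M_0=1$, where $(\mu_k)$ is positive and increasing with $\mu_0=1$, and $M_k^{1/k}\to\infty$; $m_k:=M_k/k!$, $n_k:=N_k/k!$. For a positive sequence $m$ with $m_0=1$ and $m_k^{1/k}\to\infty$, $h_m(t):=\inf_{k\in\mathbb{N}}m_kt^k$ for $t>0$. For positive sequences, $\mathrm{mg}(M,N):=\sup_{j,k\ge0,j+k\ge1}(M_{j+k}/(N_jN_k))^{1/(j+k)}\in(0,\infty]$. *)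

From HB Require Import structures.
From mathcomp Require Import all_boot all_order all_algebra.
From mathcomp Require Import all_classical all_reals all_analysis.
Set Implicit Arguments. Unset Strict Implicit. Unset Printing Implicit Defensive.
Import Order.TTheory GRing.Theory Num.Theory.
Import numFieldNormedType.Exports.
Local Open Scope classical_set_scope.
Local Open Scope ring_scope.

Definition weight_seq {R : realType} (M : nat -> R) : Prop :=
  (exists mu : nat -> R,
      mu 0%N = 1 /\ (forall k, 0 < mu k) /\ (forall k, mu k <= mu k.+1) /\
      (forall k, M k = \prod_(1 <= i < k.+1) mu i)) /\
  ((fun k : nat => M k `^ (k%:R^-1)) @ \oo --> +oo).

Definition fact_div {R : realType} (M : nat -> R) (k : nat) : R := M k / (k`!)%:R.

Definition hfun {R : realType} (m : nat -> R) (t : R) : R :=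
  inf [set m k * t ^+ k | k in [set: nat]].

Definition mg {R : realType} (M N : nat -> R) : \bar R :=
  ereal_sup [set ((M (jk.1 + jk.2)%N / (N jk.1 * N jk.2)) `^ (((jk.1 + jk.2)%N)%:R^-1))%:E
            | jk in [set jk : nat * nat | (1 <= jk.1 + jk.2)%N]].

From HB Require Import structures.
From mathcomp Require Import all_boot all_order all_algebra.
From mathcomp Require Import all_classical all_reals all_analysis.
From mathcomp Require Import ring lra.
Set Implicit Arguments. Unset Strict Implicit. Unset Printing Implicit Defensive.
Import Order.TTheory GRing.Theory Num.Theory.
Import numFieldNormedType.Exports.
Local Open Scope classical_set_scope.
Local Open Scope ring_scope.

(* The moderate growth constant C = mg(M,N) gives M_(j+k) <= C^(j+k) N_j N_k,
   and since j! k! <= (j+k)! the same holds for m and n.  Hence every term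
   n_k (Ct)^k of h_n(Ct), multiplied by C^j n_j t^j, dominates the term
   m_(j+k) t^(j+k) of h_m(t); taking j = k instead, its square dominates
   m_(2k) t^(2k), so h_m(t) <= h_n(Ct)^2, and h_n is nondecreasing while
   Ct <= eCt/2. *)

Lemma weight_seq_gt0 (R : realType) (M : nat -> R) :
  weight_seq M -> forall k, 0 < M k.
Proof.
move=> [[mu [_ [mu_gt0 [_ M_prod]]]] _] k.
by rewrite M_prod; apply: prodr_gt0 => i _; exact: mu_gt0.
Qed.

Lemma weight_seq0 (R : realType) (M : nat -> R) : weight_seq M -> M 0%N = 1.
Proof. by move=> [[mu [_ [_ [_ ->]]]] _]; rewrite big_geq. Qed.

Lemma fact_div_gt0 (R : realType) (M : nat -> R) k : 0 < M k -> 0 < fact_div M k.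
Proof. by move=> Mk_gt0; rewrite divr_gt0 // ltr0n fact_gt0. Qed.

Lemma leq_fact_addn j k : (j`! * k`! <= (j + k)`!)%N.
Proof.
rewrite -(bin_fact (leq_addr k j)) addKn.
by rewrite leq_pmull // bin_gt0 leq_addr.
Qed.

Section ModerateGrowth.
Variables (R : realType) (M N : nat -> R) (C : R).
Hypotheses (M_gt0 : forall k, 0 < M k) (N_gt0 : forall k, 0 < N k).
Hypotheses (M0 : M 0%N = 1) (N0 : N 0%N = 1) (mgC : mg M N = C%:E).

Lemma mg_ubound j k : (1 <= j + k)%N ->
  (M (j + k)%N / (N j * N k)) `^ (((j + k)%N)%:R^-1) <= C.
Proof.
by move=> jk_gt0; rewrite -lee_fin -mgC; apply: ereal_sup_ubound; exists (j, k).
Qed.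

Lemma mg_gt0 : 0 < C.
Proof.
apply: lt_le_trans (mg_ubound (j := 1%N) (k := 0%N) isT).
by rewrite powR_gt0 ?divr_gt0 ?mulr_gt0.
Qed.

Lemma weight_le_mg j k : M (j + k)%N <= C ^+ (j + k) * (N j * N k).
Proof.
have [jk0|jk_gt0] := posnP (j + k)%N.
  move/eqP: (jk0); rewrite addn_eq0 => /andP[/eqP j0 /eqP k0].
  by rewrite jk0 j0 k0 M0 N0 expr0 !mul1r.
have NjNk_gt0 : 0 < N j * N k by rewrite mulr_gt0.
set x := M (j + k)%N / (N j * N k).
have x_ge0 : 0 <= x by rewrite ltW // divr_gt0.
have -> : M (j + k)%N = x * (N j * N k) by rewrite /x divfK ?gt_eqF.
rewrite ler_pM2r //.
have -> : x = (x `^ (((j + k)%N)%:R^-1)) ^+ (j + k).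
  rewrite -powR_mulrn ?powR_ge0 // -powRrM mulVf ?powRr1 //.
  by rewrite pnatr_eq0 -lt0n.
rewrite ler_pXn2r ?nnegrE ?powR_ge0 ?(ltW mg_gt0) //.
exact: mg_ubound.
Qed.

Lemma fact_div_le_mg j k :
  fact_div M (j + k) <= C ^+ (j + k) * fact_div N j * fact_div N k.
Proof.
have fact_gt0R n : 0 < (n`!)%:R :> R by rewrite ltr0n fact_gt0.
have CNN_ge0 : 0 <= C ^+ (j + k) * (N j * N k).
  by rewrite ltW ?mulr_gt0 ?exprn_gt0 ?mg_gt0.
have -> : C ^+ (j + k) * fact_div N j * fact_div N k =
    C ^+ (j + k) * (N j * N k) / (j`! * k`!)%:R.
  by rewrite /fact_div natrM invfM; ring.
apply: le_trans (_ : _ <= C ^+ (j + k) * (N j * N k) / ((j + k)`!)%:R) _.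
  by rewrite ler_pM2r ?invr_gt0 // weight_le_mg.
rewrite ler_wpM2l // lef_pV2 ?posrE ?natrM ?mulr_gt0 //.
by rewrite -natrM ler_nat leq_fact_addn.
Qed.

Lemma fact_div_term_le_mg j k t : 0 < t ->
  fact_div M (j + k) * t ^+ (j + k) <=
    C ^+ j * fact_div N j * t ^+ j * (fact_div N k * (C * t) ^+ k).
Proof.
move=> t_gt0.
have -> : C ^+ j * fact_div N j * t ^+ j * (fact_div N k * (C * t) ^+ k) =
    C ^+ (j + k) * fact_div N j * fact_div N k * t ^+ (j + k).
  by rewrite !exprD exprMn; ring.
by rewrite ler_pM2r ?exprn_gt0 // fact_div_le_mg.
Qed.

End ModerateGrowth.

Section AssociatedFunction.
Variables (R : realType) (m : nat -> R).
Hypothesis m_ge0 : forall k, 0 <= m k.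

Lemma hfun_le_term k t : 0 <= t -> hfun m t <= m k * t ^+ k.
Proof.
move=> t_ge0; apply: ge_inf; last by exists k.
by exists 0 => _ [i _ <-]; rewrite mulr_ge0 ?exprn_ge0.
Qed.

Lemma lb_le_hfun t x : (forall k, x <= m k * t ^+ k) -> x <= hfun m t.
Proof.
move=> x_lb; apply: lb_le_inf; first by exists (m 0%N * t ^+ 0); exists 0%N.
by move=> _ [i _ <-].
Qed.

Lemma hfun_ge0 t : 0 <= t -> 0 <= hfun m t.
Proof. by move=> t_ge0; apply: lb_le_hfun => k; rewrite mulr_ge0 ?exprn_ge0. Qed.

Lemma le_hfun s t : 0 <= s -> s <= t -> hfun m s <= hfun m t.
Proof.
move=> s_ge0 st; apply: lb_le_hfun => k; apply: le_trans (hfun_le_term k s_ge0) _.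
by rewrite ler_wpM2l // lerXn2r ?nnegrE ?(le_trans s_ge0).
Qed.

End AssociatedFunction.

Lemma hfun_le_scale (R : realType) (m n : nat -> R) (f : nat -> nat) (a s t : R) :
  (forall k, 0 <= m k) -> 0 <= t -> 0 < a ->
  (forall k, m (f k) * t ^+ f k <= a * (n k * s ^+ k)) ->
  hfun m t <= a * hfun n s.
Proof.
move=> m_ge0 t_ge0 a_gt0 dom; rewrite -ler_pdivrMl //.
apply: lb_le_hfun => k; rewrite ler_pdivrMl //.
exact: le_trans (hfun_le_term m_ge0 (f k) t_ge0) (dom k).
Qed.

Lemma hfun_le_sqr (R : realType) (m n : nat -> R) (f : nat -> nat) (s t : R) :
  (forall k, 0 <= m k) -> (forall k, 0 <= n k) -> 0 <= t -> 0 <= s ->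
  (forall k, m (f k) * t ^+ f k <= (n k * s ^+ k) ^+ 2) ->
  hfun m t <= hfun n s ^+ 2.
Proof.
move=> m_ge0 n_ge0 t_ge0 s_ge0 dom.
have h_ge0 := hfun_ge0 m_ge0 t_ge0.
rewrite -(sqr_sqrtr h_ge0) ler_pXn2r ?nnegrE ?sqrtr_ge0 ?hfun_ge0 //.
apply: lb_le_hfun => k.
have term_ge0 : 0 <= n k * s ^+ k by rewrite mulr_ge0 ?exprn_ge0.
rewrite -[leRHS]ger0_norm // -sqrtr_sqr ler_sqrt ?sqr_ge0 //.
exact: le_trans (hfun_le_term m_ge0 (f k) t_ge0) (dom k).
Qed.

Theorem lemma5p1 (R : realType) (M N : nat -> R) (C : R) :
  weight_seq M -> weight_seq N ->
  ((fun k : nat => fact_div M k `^ (k%:R^-1)) @ \oo --> +oo) ->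
  ((fun k : nat => fact_div N k `^ (k%:R^-1)) @ \oo --> +oo) ->
  mg M N = C%:E ->
  (forall (t : R) (j : nat), 0 < t ->
     hfun (fact_div M) t <= C ^+ j * fact_div N j * t ^+ j * hfun (fact_div N) (C * t)) /\
  (forall t : R, 0 < t ->
     hfun (fact_div M) t <= (hfun (fact_div N) (expR 1 * C / 2 * t)) ^+ 2).
Proof.
move=> wM wN _ _ mgC.
have M_gt0 := weight_seq_gt0 wM; have N_gt0 := weight_seq_gt0 wN.
have term_le := fact_div_term_le_mg M_gt0 N_gt0 (weight_seq0 wM) (weight_seq0 wN) mgC.
have C_gt0 := mg_gt0 M_gt0 N_gt0 mgC.
have m_ge0 k := ltW (fact_div_gt0 (M_gt0 k)).
have n_ge0 k := ltW (fact_div_gt0 (N_gt0 k)).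
split=> [t j t_gt0|t t_gt0].
  apply: (hfun_le_scale (f := addn j) m_ge0 (ltW t_gt0)) => [|k]; last exact: term_le.
  by rewrite !mulr_gt0 ?exprn_gt0 ?fact_div_gt0.
have Ct_ge0 : 0 <= C * t by rewrite mulr_ge0 ?ltW.
have Ct_le : C * t <= expR 1 * C / 2 * t.
  have e_ge2 : 2 <= expR 1 :> R by have := expR_ge1Dx (1 : R); lra.
  have -> : expR 1 * C / 2 * t = expR 1 / 2 * (C * t) by ring.
  by rewrite ler_peMl // ler_pdivlMr //; lra.
apply: le_trans (_ : _ <= hfun (fact_div N) (C * t) ^+ 2) _.
  apply: (hfun_le_sqr (f := fun k => (k + k)%N) m_ge0 n_ge0 (ltW t_gt0) Ct_ge0) => k.
  have -> : (fact_div N k * (C * t) ^+ k) ^+ 2 =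
      C ^+ k * fact_div N k * t ^+ k * (fact_div N k * (C * t) ^+ k).
    by rewrite expr2 exprMn; ring.
  exact: term_le.
by rewrite ler_pXn2r ?nnegrE ?hfun_ge0 ?(le_trans Ct_ge0 Ct_le) ?le_hfun.
Qed.
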